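(* Let $(G,c)$ be a $k$-terminal network whose minimum $S$-separating cuts are unique for all $S\subset Q$, $S\neq\emptyset,Q$, so that $\Delta_{G,c}>0$. Let $A_G=A_{G,c}\in\{0,1\}^{m\times E(G)}$ be its cutset-edge incidence matrix, let $r=\mathrm{rank}(A_G)\ge1$, and fix any matrix $A\in\{0,1\}^{m\times(r-1)}$ with column span $W_A\subseteq\mathbb{R}^m$. Let $w\in\mathbb{R}^{E(G)}$ be random with independent coordinates $w(e)$, each uniformly distributed on $[0,\frac{1}{\Delta_{G,c}|E(G)|}]$, and let $\vec c\in\mathbb{R}^{E(G)}$ be the vector of costs $c$. Then $$\Pr_w\big[A_G(\vec c+\vec w)\in W_A\big]=0.$$
   Context: For $S\subset Q$, $\bar S=Q\setminus S$; a cut $(W,V(G)\setminus W)$ is $S$-separating if $W\cap Q\in\{S,\bar S\}$; its cost is the total cost of its cutset (edges with exactly one endpoint in $W$). $\Delta_{G,c}(S)\ge0$ is the difference between the two smallest costs among all $S$-separating cuts, and $\Delta_{G,c}=\min_S\Delta_{G,c}(S)$. Cutset-edge incidence matrix: fix an enumeration $S_1,\dots,S_m$, $m=2^{k-1}-1$, of representatives of the distinct nontrivial bipartitions $Q=S_i\cup\bar S_i$, and for each $i$ a minimum-cost $S_i$-separating cut; $(A_{G,c})_{i,e}=1$ iff $e$ lies in that cut's cutset, else $0$. *)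

From Stdlib Require Import Reals List Arith.
Import ListNotations.
Open Scope R_scope.

Definition rsum (n : nat) (f : nat -> R) : R :=
  fold_right Rplus 0 (map f (seq 0 n)).
Definition rprod (n : nat) (f : nat -> R) : R :=
  fold_right Rmult 1 (map f (seq 0 n)).

(* A k-terminal network: vertices 0..n-1, edges indexed 0..E-1 given by
   the list [edges] of endpoint pairs, costs c : nat -> R (c j = cost of
   edge j), terminal list Q (duplicate free; k = length Q). *)
Definition wf_network (n : nat) (edges : list (nat * nat)) (c : nat -> R)
  (Q : list nat) : Prop :=
  (forall e, In e edges -> (fst e < n)%nat /\ (snd e < n)%nat /\ fst e <> snd e) /\
  (forall j, (j < length edges)%nat -> 0 <= c j) /\
  NoDup Q /\ (forall q, In q Q -> (q < n)%nat).

(* a subset S of Q (given by a predicate on vertices, only its values on Q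
   matter) is nontrivial iff S <> emptyset, S <> Q *)
Definition nontrivial (Q : list nat) (S : nat -> bool) : Prop :=
  (exists q, In q Q /\ S q = true) /\ (exists q, In q Q /\ S q = false).

(* a cut is given by one side W : nat -> bool (only values on 0..n-1 matter);
   it is S-separating if W ∩ Q ∈ {S, Q \ S} *)
Definition separating (Q : list nat) (S W : nat -> bool) : Prop :=
  (forall q, In q Q -> W q = S q) \/ (forall q, In q Q -> W q = negb (S q)).

Definition in_cutset (edges : list (nat * nat)) (W : nat -> bool) (j : nat) : bool :=
  let e := nth j edges (0%nat, 0%nat) in xorb (W (fst e)) (W (snd e)).

Definition cut_cost (edges : list (nat * nat)) (c : nat -> R) (W : nat -> bool) : R :=
  rsum (length edges) (fun j => if in_cutset edges W j then c j else 0).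

(* (W, V\W) and (W', V\W') are the same cut (cuts are unordered bipartitions) *)
Definition same_cut (n : nat) (W W' : nat -> bool) : Prop :=
  (forall v, (v < n)%nat -> W' v = W v) \/ (forall v, (v < n)%nat -> W' v = negb (W v)).

Definition min_sep_cut edges c Q (S W : nat -> bool) : Prop :=
  separating Q S W /\
  forall W', separating Q S W' -> cut_cost edges c W <= cut_cost edges c W'.

Definition unique_min_cuts n edges c Q : Prop :=
  forall S, nontrivial Q S -> forall W W',
    min_sep_cut edges c Q S W -> min_sep_cut edges c Q S W' -> same_cut n W W'.

(* Delta_{G,c}(S) = d : difference between the two smallest costs among all
   (distinct) S-separating cuts. *)
Definition DeltaS n edges c Q (S : nat -> bool) (d : R) : Prop :=
  exists W0 W1,
    min_sep_cut edges c Q S W0 /\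
    separating Q S W1 /\ ~ same_cut n W0 W1 /\
    (forall W, separating Q S W -> ~ same_cut n W0 W ->
       cut_cost edges c W1 <= cut_cost edges c W) /\
    d = cut_cost edges c W1 - cut_cost edges c W0.

Definition DeltaG n edges c Q (d : R) : Prop :=
  (exists S, nontrivial Q S /\ DeltaS n edges c Q S d) /\
  (forall S d', nontrivial Q S -> DeltaS n edges c Q S d' -> d <= d').

(* S_0,...,S_{m-1} (m = 2^(k-1)-1) are representatives of the distinct
   nontrivial bipartitions of Q *)
Definition bipartition_enum (Q : list nat) (m : nat) (Sn : nat -> nat -> bool) : Prop :=
  m = (2 ^ (length Q - 1) - 1)%nat /\
  (forall i, (i < m)%nat -> nontrivial Q (Sn i)) /\
  (forall i j, (i < j < m)%nat ->
     ~ (forall q, In q Q -> Sn j q = Sn i q) /\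
     ~ (forall q, In q Q -> Sn j q = negb (Sn i q))).

Definition cutset_matrix edges c Q m (Sn : nat -> nat -> bool)
  (AG : nat -> nat -> R) : Prop :=
  forall i, (i < m)%nat -> exists W, min_sep_cut edges c Q (Sn i) W /\
    forall j, (j < length edges)%nat ->
      AG i j = if in_cutset edges W j then 1 else 0.

Definition lin_indep_cols (m N : nat) (M : nat -> nat -> R) (js : list nat) : Prop :=
  NoDup js /\ (forall j, In j js -> (j < N)%nat) /\
  forall a : nat -> R,
    (forall i, (i < m)%nat -> fold_right Rplus 0 (map (fun j => a j * M i j) js) = 0) ->
    forall j, In j js -> a j = 0.

Definition real_rank (m N : nat) (M : nat -> nat -> R) (r : nat) : Prop :=
  (exists js, lin_indep_cols m N M js /\ length js = r) /\
  (forall js, lin_indep_cols m N M js -> (length js <= r)%nat).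

Definition in_col_span (m p : nat) (A : nat -> nat -> R) (v : nat -> R) : Prop :=
  exists x : nat -> R, forall i, (i < m)%nat -> rsum p (fun j => A i j * x j) = v i.

(* Lebesgue-null subset of R^N (coordinates 0..N-1 of w : nat -> R):
   for every eps > 0 it is covered by countably many boxes of total volume
   <= eps. *)
Definition lebesgue_null (N : nat) (P : (nat -> R) -> Prop) : Prop :=
  forall eps, 0 < eps ->
    exists lo hi : nat -> nat -> R,
      (forall k j, lo k j <= hi k j) /\
      (forall w, P w -> exists k, forall j, (j < N)%nat -> lo k j <= w j <= hi k j) /\
      (forall K, rsum K (fun k => rprod N (fun j => hi k j - lo k j)) <= eps).

(* Pr_w[event] = 0 for w uniform on the box [0,b]^N with b > 0
   (independent uniform coordinates), i.e. the event inside the box is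
   Lebesgue-null. *)
Definition prob_zero_uniform_box (N : nat) (b : R) (event : (nat -> R) -> Prop) : Prop :=
  lebesgue_null N (fun w => (forall j, (j < N)%nat -> 0 <= w j <= b) /\ event w).

(* Since rank A_G = r exceeds the number r - 1 of columns of A, the
   left kernel of A is not contained in the left kernel of A_G: there is a
   weight vector y with y A = 0 and u := y A_G <> 0, say u_j0 <> 0.  If
   A_G (c + w) lies in W_A then u . (c + w) = y A_G (c + w) = 0, so w lies on
   the affine hyperplane {u . w = - u . c}.  Solved for w_j0 this hyperplane
   is the graph of an affine function of the other coordinates, and such a
   graph meets a cube in a Lebesgue-null set: cover it by a grid of mesh dl
   in the other coordinates, each cell thickened by O(dl) along axis j0, of
   total volume O(dl). *)

From Stdlib Require Import Reals List Lia Lra.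
From mathcomp Require all_boot all_algebra Rstruct zify.
Import ListNotations.
Open Scope R_scope.

Lemma rsum_S n f : rsum (S n) f = rsum n f + f n.
Proof.
  unfold rsum. rewrite seq_S, map_app, fold_right_app. simpl.
  induction (map f (seq 0 n)); simpl; lra.
Qed.

Lemma rprod_S n f : rprod (S n) f = rprod n f * f n.
Proof.
  unfold rprod. rewrite seq_S, map_app, fold_right_app. simpl.
  induction (map f (seq 0 n)) as [|x l IH]; simpl; [ring|rewrite IH; ring].
Qed.

Lemma rsum_S_l n f : rsum (S n) f = f 0%nat + rsum n (fun k => f (S k)).
Proof. induction n; [unfold rsum; simpl; ring|]. rewrite rsum_S, IHn, rsum_S. ring. Qed.

Lemma rsum_ext n f g : (forall j, (j < n)%nat -> f j = g j) -> rsum n f = rsum n g.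
Proof.
  induction n; intros H; [reflexivity|].
  rewrite !rsum_S, (H n) by lia. rewrite IHn; [reflexivity|intros; apply H; lia].
Qed.

Lemma rprod_ext n f g : (forall j, (j < n)%nat -> f j = g j) -> rprod n f = rprod n g.
Proof.
  induction n; intros H; [reflexivity|].
  rewrite !rprod_S, (H n) by lia. rewrite IHn; [reflexivity|intros; apply H; lia].
Qed.

Lemma rsum_plus n f g : rsum n (fun j => f j + g j) = rsum n f + rsum n g.
Proof. induction n; [unfold rsum; simpl; ring|]. rewrite !rsum_S, IHn. ring. Qed.

Lemma rsum_scal n k f : rsum n (fun j => k * f j) = k * rsum n f.
Proof. induction n; [unfold rsum; simpl; ring|]. rewrite !rsum_S, IHn. ring. Qed.

Lemma rsum_zero n f : (forall j, (j < n)%nat -> f j = 0) -> rsum n f = 0.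
Proof.
  intros H. rewrite (rsum_ext n f (fun _ => 0 * 0)) by (intros; rewrite H; auto; ring).
  rewrite rsum_scal. ring.
Qed.

Lemma rsum_le n f g : (forall j, (j < n)%nat -> f j <= g j) -> rsum n f <= rsum n g.
Proof.
  induction n; intros H; [unfold rsum; simpl; lra|]. rewrite !rsum_S.
  assert (f n <= g n) by (apply H; lia).
  assert (rsum n f <= rsum n g) by (apply IHn; intros; apply H; lia). lra.
Qed.

Lemma rsum_abs n f : Rabs (rsum n f) <= rsum n (fun j => Rabs (f j)).
Proof.
  induction n; [unfold rsum; simpl; rewrite Rabs_R0; lra|]. rewrite !rsum_S.
  eapply Rle_trans; [apply Rabs_triang|]. lra.
Qed.

Lemma rsum_swap m n (y : nat -> R) (f : nat -> nat -> R) :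
  rsum m (fun i => y i * rsum n (fun j => f i j)) =
  rsum n (fun j => rsum m (fun i => y i * f i j)).
Proof.
  induction m.
  - unfold rsum at 1; simpl. symmetry; apply rsum_zero; reflexivity.
  - rewrite rsum_S, IHm, <- rsum_scal, <- rsum_plus.
    apply rsum_ext; intros; rewrite rsum_S; reflexivity.
Qed.

Lemma rsum_split n j0 f : (j0 < n)%nat ->
  rsum n f = rsum n (fun j => if Nat.eqb j j0 then 0 else f j) + f j0.
Proof.
  induction n; intros H; [lia|]. rewrite !rsum_S.
  destruct (Nat.eq_dec j0 n).
  - subst. rewrite Nat.eqb_refl.
    rewrite (rsum_ext n (fun j => if Nat.eqb j n then 0 else f j) f); [lra|].
    intros j Hj. destruct (Nat.eqb_spec j n); [lia|reflexivity].
  - rewrite IHn by lia. destruct (Nat.eqb_spec n j0); [lia|lra].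
Qed.

Lemma fold_map_rsum (g : nat -> R) js :
  fold_right Rplus 0 (map g js) = rsum (length js) (fun k => g (nth k js 0%nat)).
Proof. induction js; [reflexivity|]. simpl. rewrite rsum_S_l, IHjs. reflexivity. Qed.

Lemma rsum_indicator_le K T V : 0 <= V ->
  rsum K (fun k => if Nat.ltb k T then V else 0) <= INR T * V.
Proof.
  intros HV.
  assert (Hmin : rsum K (fun k => if Nat.ltb k T then V else 0) = INR (Nat.min K T) * V).
  { induction K; [unfold rsum; simpl; lra|]. rewrite rsum_S, IHK.
    destruct (Nat.ltb_spec K T).
    - replace (Nat.min (S K) T) with (S (Nat.min K T)) by lia. rewrite S_INR. lra.
    - replace (Nat.min (S K) T) with (Nat.min K T) by lia. lra. }
  rewrite Hmin. apply Rmult_le_compat_r; auto. apply le_INR. lia.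
Qed.

Lemma rprod_all_but_one N j0 h dl : (j0 < N)%nat ->
  rprod N (fun j => if Nat.eqb j j0 then h else dl) = dl ^ (N - 1) * h.
Proof.
  induction N; intros H; [lia|]. rewrite rprod_S.
  destruct (Nat.eq_dec j0 N).
  - subst. rewrite Nat.eqb_refl, (rprod_ext N _ (fun _ => dl)).
    + replace (S N - 1)%nat with N by lia. f_equal.
      clear. induction N; [reflexivity|]. rewrite rprod_S, IHN. simpl. ring.
    + intros j Hj. destruct (Nat.eqb_spec j N); [lia|reflexivity].
  - rewrite IHN by lia. destruct (Nat.eqb_spec N j0); [lia|].
    replace (S N - 1)%nat with (S (N - 1)) by lia. simpl. ring.
Qed.

(* [grid l] lists all index tuples t with t_i < l_i, i.e. the cells of a
   rectangular grid with l_i subdivisions along axis i. *)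
Fixpoint grid (l : list nat) : list (list nat) :=
  match l with
  | [] => [[]]
  | r :: l' => flat_map (fun i => map (cons i) (grid l')) (seq 0 r)
  end.

Lemma grid_length l : length (grid l) = fold_right mult 1%nat l.
Proof.
  induction l as [|r l IH]; simpl; auto. rewrite <- IH.
  assert (Hfm : forall s, length (flat_map (fun i => map (cons i) (grid l)) s)
                          = (length s * length (grid l))%nat).
  { induction s as [|i s IHs]; simpl; auto. rewrite length_app, length_map, IHs. lia. }
  rewrite Hfm, length_seq. reflexivity.
Qed.

Lemma grid_complete l t : length t = length l ->
  (forall i, (i < length l)%nat -> (nth i t 0%nat < nth i l 0%nat)%nat) -> In t (grid l).
Proof.
  revert t; induction l as [|x l IH]; intros t Hl H.
  - destruct t; simpl in *; [auto|lia].
  - destruct t as [|y t]; simpl in *; [lia|].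
    apply in_flat_map. exists y. split.
    + apply in_seq. specialize (H 0%nat). simpl in H. lia.
    + apply in_map. apply IH; [lia|]. intros i Hi. apply (H (S i)). lia.
Qed.

Lemma grid_size_but_one N j0 M :
  fold_right mult 1%nat (map (fun j => if Nat.eqb j j0 then 1%nat else M) (seq 0 N)) =
  (if Nat.ltb j0 N then M ^ (N - 1) else M ^ N)%nat.
Proof.
  assert (Happ : forall l x, fold_right mult 1%nat (l ++ [x]) = (fold_right mult 1%nat l * x)%nat)
    by (intros l x; induction l as [|y l IHl]; simpl; [lia|rewrite IHl; ring]).
  induction N; [reflexivity|].
  rewrite seq_S, map_app. cbn [map]. rewrite Happ, IHN. simpl.
  destruct (Nat.eqb_spec N j0), (Nat.ltb_spec j0 N), (Nat.ltb_spec j0 (S N)); try lia;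
    rewrite Nat.sub_0_r.
  - ring.
  - destruct N; [lia|]. simpl. rewrite Nat.sub_0_r. ring.
Qed.

Lemma finite_choice n (bnd : nat -> nat) (P : nat -> nat -> Prop) :
  (forall j, (j < n)%nat -> exists t, (t < bnd j)%nat /\ P j t) ->
  exists tl, length tl = n /\
    forall j, (j < n)%nat -> (nth j tl 0%nat < bnd j)%nat /\ P j (nth j tl 0%nat).
Proof.
  induction n; intros H.
  - exists []. split; auto. intros; lia.
  - destruct IHn as [tl [Hl Ht]]; [intros; apply H; lia|].
    destruct (H n) as [t Ht2]; [lia|].
    exists (tl ++ [t]). split; [rewrite length_app; simpl; lia|].
    intros j Hj. destruct (Nat.eq_dec j n).
    + subst. rewrite app_nth2, Nat.sub_diag by lia. simpl. auto.
    + rewrite app_nth1 by lia. apply Ht. lia.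
Qed.

Lemma interval_cell M x dl : (1 <= M)%nat -> 0 < dl -> 0 <= x <= INR M * dl ->
  exists t, (t < M)%nat /\ INR t * dl <= x <= INR t * dl + dl.
Proof.
  induction M; intros HM Hd Hx; [lia|].
  destruct (Nat.eq_dec M 0).
  - subst. exists 0%nat. simpl in *. split; [lia|lra].
  - destruct (Rle_dec x (INR M * dl)).
    + destruct IHM as [t [Ht1 Ht2]]; auto; try lia; try lra.
      exists t; split; auto; lia.
    + exists M. rewrite S_INR in Hx. split; [lia|lra].
Qed.

(* Cells of mesh dl subdividing [0, M dl]^N along every axis except j0 (which
   is not subdivided). *)
Definition slab_cells (N j0 M : nat) : list (list nat) :=
  grid (map (fun j => if Nat.eqb j j0 then 1%nat else M) (seq 0 N)).

Lemma slab_cell_of_point N j0 M dl w : (1 <= M)%nat -> 0 < dl ->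
  (forall j, (j < N)%nat -> 0 <= w j <= INR M * dl) ->
  exists t, In t (slab_cells N j0 M) /\
    forall j, (j < N)%nat -> j <> j0 ->
      INR (nth j t 0%nat) * dl <= w j <= INR (nth j t 0%nat) * dl + dl.
Proof.
  intros HM Hdl Hw.
  set (bnd := fun j => if Nat.eqb j j0 then 1%nat else M).
  destruct (finite_choice N bnd (fun j t => j = j0 \/ INR t * dl <= w j <= INR t * dl + dl))
    as [t [Hlen Ht]].
  { intros j Hj. unfold bnd. destruct (Nat.eqb_spec j j0).
    - exists 0%nat. split; [lia|left; auto].
    - destruct (interval_cell M (w j) dl) as [tj Htj]; auto. exists tj. tauto. }
  exists t. split.
  - apply grid_complete; rewrite length_map, length_seq; auto.
    intros i Hi. fold bnd.
    rewrite (nth_indep (map bnd (seq 0 N)) _ (bnd 0%nat))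
      by (rewrite length_map, length_seq; auto).
    rewrite map_nth, seq_nth by auto. apply Ht; auto.
  - intros j Hj Hne. destruct (Ht j Hj) as [_ [Hc|Hc]]; [lia|auto].
Qed.

Lemma linear_form_deviation N (a w t : nat -> R) dl :
  (forall j, (j < N)%nat -> a j = 0 \/ Rabs (w j - t j) <= dl) ->
  Rabs (rsum N (fun j => a j * w j) - rsum N (fun j => a j * t j))
    <= rsum N (fun j => Rabs (a j)) * dl.
Proof.
  intros H.
  replace (rsum N (fun j => a j * w j) - rsum N (fun j => a j * t j))
    with (rsum N (fun j => a j * (w j - t j))).
  2:{ rewrite (rsum_ext N _ (fun j => a j * w j + (-1) * (a j * t j))) by (intros; ring).
      rewrite rsum_plus, rsum_scal. ring. }
  eapply Rle_trans; [apply rsum_abs|].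
  rewrite Rmult_comm, <- rsum_scal. apply rsum_le. intros j Hj.
  rewrite Rabs_mult. destruct (H j Hj) as [Ha|Hd].
  - rewrite Ha, Rabs_R0. lra.
  - pose proof (Rabs_pos (a j)). nra.
Qed.

(* Along axis j0, the graph {w_j0 = s - sum_j a_j w_j} at the corner of the
   slab cell t of mesh dl. *)
Definition cell_center (N : nat) (a : nat -> R) (s dl : R) (t : list nat) : R :=
  s - rsum N (fun j => a j * (INR (nth j t 0%nat) * dl)).

Lemma graph_point_in_cell N j0 M dl (a w : nat -> R) s :
  (1 <= M)%nat -> 0 < dl -> a j0 = 0 ->
  (forall j, (j < N)%nat -> 0 <= w j <= INR M * dl) ->
  w j0 = s - rsum N (fun j => a j * w j) ->
  exists t, In t (slab_cells N j0 M) /\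
    (forall j, (j < N)%nat -> j <> j0 ->
       INR (nth j t 0%nat) * dl <= w j <= INR (nth j t 0%nat) * dl + dl) /\
    Rabs (w j0 - cell_center N a s dl t) <= rsum N (fun j => Rabs (a j)) * dl.
Proof.
  intros HM Hdl Ha0 Hbox Hgraph.
  destruct (slab_cell_of_point N j0 M dl w) as [t [Ht Hcell]]; auto.
  exists t. split; [|split]; auto.
  unfold cell_center. rewrite Hgraph.
  replace (s - rsum N (fun j => a j * w j)
             - (s - rsum N (fun j => a j * (INR (nth j t 0%nat) * dl))))
    with (- (rsum N (fun j => a j * w j) - rsum N (fun j => a j * (INR (nth j t 0%nat) * dl))))
    by ring.
  rewrite Rabs_Ropp. apply linear_form_deviation. intros j Hj.
  destruct (Nat.eq_dec j j0) as [->|Hne]; [left; auto|right].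
  apply Rabs_le. specialize (Hcell j Hj Hne). lra.
Qed.

Lemma slab_volume_small N M L B eps : (1 <= N)%nat -> 0 < B -> 0 < eps ->
  0 < INR M -> 2 * L * B ^ N / eps < INR M ->
  INR (M ^ (N - 1)) * ((B / INR M) ^ (N - 1) * (2 * L * (B / INR M))) <= eps.
Proof.
  intros HN HB Heps HM HMbig.
  replace (INR (M ^ (N - 1)) * ((B / INR M) ^ (N - 1) * (2 * L * (B / INR M))))
    with (2 * L * B ^ N / INR M).
  2:{ rewrite pow_INR, <- Rmult_assoc, <- Rpow_mult_distr.
      replace (INR M * (B / INR M)) with B by (field; lra).
      replace N with (S (N - 1)) at 1 by lia. simpl. field. lra. }
  apply Rlt_le. apply (Rmult_lt_reg_r (INR M / eps)).
  { apply Rdiv_lt_0_compat; lra. }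
  replace (2 * L * B ^ N / INR M * (INR M / eps)) with (2 * L * B ^ N / eps) by (field; lra).
  replace (eps * (INR M / eps)) with (INR M) by (field; lra). exact HMbig.
Qed.

(* The graph {w_j0 = s - sum_j a_j w_j} (with a_j0 = 0) of an affine function
   of the other coordinates meets the cube [0,b]^N in a Lebesgue-null set: it
   is covered by the cells of a grid of mesh dl = B/M on the other axes,
   thickened by L dl (L = sum_j |a_j|) around the graph along axis j0. *)
Lemma graph_null N b j0 (a : nat -> R) s :
  (j0 < N)%nat -> a j0 = 0 ->
  lebesgue_null N (fun w => (forall j, (j < N)%nat -> 0 <= w j <= b) /\
                              w j0 = s - rsum N (fun j => a j * w j)).
Proof.
  intros Hj0 Ha0 eps Heps.
  set (B := Rabs b + 1).
  assert (HB : 0 < B) by (unfold B; pose proof (Rabs_pos b); lra).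
  set (L := rsum N (fun j => Rabs (a j))).
  assert (HL : 0 <= L).
  { unfold L. rewrite <- (rsum_zero N (fun _ => 0)) by auto.
    apply rsum_le. intros; apply Rabs_pos. }
  destruct (INR_archimed 1 (2 * L * B ^ N / eps)) as [n0 Hn0]; [lra|].
  set (M := S n0).
  assert (HMbig : 2 * L * B ^ N / eps < INR M) by (unfold M; rewrite S_INR; lra).
  assert (HM : 0 < INR M) by (unfold M; apply lt_0_INR; lia).
  set (dl := B / INR M).
  assert (Hdl : 0 < dl) by (unfold dl; apply Rdiv_lt_0_compat; lra).
  set (T := slab_cells N j0 M).
  set (corner := fun k j => INR (nth j (nth k T []) 0%nat) * dl).
  set (ctr := fun k => cell_center N a s dl (nth k T [])).
  exists (fun k j => if Nat.ltb k (length T) then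
                     (if Nat.eqb j j0 then ctr k - L * dl else corner k j) else 0).
  exists (fun k j => if Nat.ltb k (length T) then
                     (if Nat.eqb j j0 then ctr k + L * dl else corner k j + dl) else 0).
  split; [|split].
  - intros k j. destruct (Nat.ltb k (length T)), (Nat.eqb j j0); nra.
  - intros w [Hbox Hgraph].
    destruct (graph_point_in_cell N j0 M dl a w s) as [t [Ht [Hcell Hctr]]];
      [unfold M; lia|auto|auto| |auto|].
    { intros j Hj. replace (INR M * dl) with B by (unfold dl; field; lra).
      specialize (Hbox j Hj). unfold B. pose proof (Rle_abs b). lra. }
    destruct (In_nth T t [] Ht) as [k [Hk Hkt]].
    exists k. intros j Hj.
    replace (Nat.ltb k (length T)) with true by (symmetry; apply Nat.ltb_lt; auto).
    unfold ctr, corner. rewrite Hkt.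
    destruct (Nat.eqb_spec j j0) as [->|Hne]; [|apply Hcell; auto].
    revert Hctr. fold L. unfold Rabs. destruct Rcase_abs; lra.
  - intros K.
    rewrite (rsum_ext K _ (fun k => if Nat.ltb k (length T)
                                    then dl ^ (N - 1) * (2 * L * dl) else 0)).
    + eapply Rle_trans; [apply rsum_indicator_le, Rmult_le_pos; [apply pow_le|]; nra|].
      unfold T, slab_cells. rewrite grid_length, grid_size_but_one.
      replace (Nat.ltb j0 N) with true by (symmetry; apply Nat.ltb_lt; auto).
      apply slab_volume_small; auto; lia.
    + intros k _. destruct (Nat.ltb k (length T)).
      * rewrite <- (rprod_all_but_one N j0 (2 * L * dl) dl) by auto.
        apply rprod_ext. intros j _. destruct (Nat.eqb j j0); ring.
      * rewrite (rprod_ext N _ (fun j => if Nat.eqb j j0 then 0 else 0)).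
        -- rewrite rprod_all_but_one by auto. ring.
        -- intros j _. destruct (Nat.eqb j j0); ring.
Qed.

Lemma lebesgue_null_mono N (P P' : (nat -> R) -> Prop) :
  (forall w, P w -> P' w) -> lebesgue_null N P' -> lebesgue_null N P.
Proof.
  intros HPP' Hnull eps Heps.
  destruct (Hnull eps Heps) as [lo [hi [Hle [Hcover Hvol]]]].
  exists lo, hi. split; [|split]; auto.
Qed.

(* A hyperplane {sum_j u_j w_j = s} with a nonzero coefficient u_j0 meets the
   cube [0,b]^N in a null set: solved for w_j0 it is the graph of an affine
   function of the other coordinates. *)
Lemma hyperplane_null N b j0 (u : nat -> R) s :
  (j0 < N)%nat -> u j0 <> 0 ->
  lebesgue_null N (fun w => (forall j, (j < N)%nat -> 0 <= w j <= b) /\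
                              rsum N (fun j => u j * w j) = s).
Proof.
  intros Hj0 Hu.
  set (a := fun j => if Nat.eqb j j0 then 0 else u j / u j0).
  apply lebesgue_null_mono with
    (fun w => (forall j, (j < N)%nat -> 0 <= w j <= b) /\
              w j0 = s / u j0 - rsum N (fun j => a j * w j)).
  - intros w [Hbox Hplane]. split; auto.
    rewrite (rsum_split N j0) in Hplane by auto.
    rewrite (rsum_ext N (fun j => a j * w j)
               (fun j => / u j0 * (if Nat.eqb j j0 then 0 else u j * w j))).
    + rewrite rsum_scal. apply (Rmult_eq_reg_l (u j0)); auto.
      rewrite <- Hplane. field. auto.
    + intros j _. unfold a. destruct (Nat.eqb j j0); [ring|field; auto].
  - apply graph_null; auto. unfold a. rewrite Nat.eqb_refl. reflexivity.
Qed.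

Module ColumnSpace.
Import all_boot all_algebra Rstruct zify GRing.Theory.

Lemma rsum_big n (f : nat -> R) : rsum n f = (\sum_(i < n) f i)%R.
Proof. elim: n => [|n IH]; first by rewrite big_ord0. by rewrite rsum_S big_ord_recr /= IH. Qed.

Section Matrices.
Local Open Scope ring_scope.

(* If H has full column rank r and B has p < r columns, some linear form y
   kills every column of B but not every column of H: the left kernel of B
   has dimension >= m - p > m - r, the dimension of the left kernel of H. *)
Lemma annihilator_exists {F : fieldType} {m r p : nat}
    (H : 'M[F]_(m, r)) (B : 'M[F]_(m, p)) :
  \rank H = r -> (p < r)%N -> exists y : 'rV_m, y *m B = 0 /\ y *m H != 0.
Proof.
move=> rkH ltpr.
have KH_neq0 : kermx B *m H != 0.
  apply/negP => /eqP KH0.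
  have /mxrankS : (kermx B <= kermx H)%MS by apply/sub_kermxP.
  rewrite !mxrank_ker rkH.
  have := rank_leq_col B; have := rank_leq_row H; rewrite rkH; lia.
have /rowV0Pn [v /submxP [D ->] v_neq0] := KH_neq0.
exists (D *m kermx B); split; first by apply/sub_kermxP; rewrite submxMl.
by rewrite -mulmxA.
Qed.

Lemma indep_cols_full_rank {m N : nat} {M : nat -> nat -> R} {js : list nat} :
  lin_indep_cols m N M js ->
  \rank (\matrix_(i < m, k < length js) M i (List.nth k js 0%N)) = length js.
Proof.
move=> [js_uniq [_ js_indep]].
set H := \matrix_(i < m, k < length js) _.
rewrite -mxrank_tr; apply/eqP; rewrite -[_ == _]/(row_free H^T) -kermx_eq0.
apply: contraT => /rowV0Pn [v /sub_kermxP vH0 v_neq0].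
pose a (j : nat) : R := \sum_(k < length js) (if List.nth k js 0%N == j then v 0 k else 0).
have a_nth (k : 'I_(length js)) : a (List.nth k js 0%N) = v 0 k.
  rewrite /a (bigD1 k) //= eqxx big1 ?addr0 // => k' k'_neq_k.
  case: eqP => // nth_eq; case/eqP: k'_neq_k; apply: val_inj => /=.
  by apply/(NoDup_nth js 0%N).1 => //; apply/ltP.
have a0 : forall j, In j js -> a j = 0.
  apply: js_indep => i lt_im; rewrite fold_map_rsum rsum_big.
  have /ltP lt_im' := lt_im.
  transitivity ((v *m H^T) 0 (Ordinal lt_im')); last by rewrite vH0 mxE.
  by rewrite mxE; apply: eq_bigr => k _; rewrite a_nth !mxE.
case/eqP: v_neq0; apply/rowP => k; rewrite mxE -a_nth a0 //.
by apply: nth_In; apply/ltP.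
Qed.

End Matrices.

Lemma separating_functional (m N p : nat) (M A : nat -> nat -> R) (js : list nat) :
  lin_indep_cols m N M js -> (p < length js)%coq_nat ->
  exists (y : nat -> R) (j0 : nat), (j0 < N)%coq_nat /\
    rsum m (fun i => y i * M i j0) <> 0 /\
    forall j, (j < p)%coq_nat -> rsum m (fun i => y i * A i j) = 0.
Proof.
move=> indep /ltP lt_p.
set H := (\matrix_(i < m, k < length js) M i (List.nth k js 0%N))%R.
set B := (\matrix_(i < m, j < p) A i j)%R.
have [y [yB0 yH_neq0]] :=
  annihilator_exists H B (indep_cols_full_rank indep) lt_p.
have [k yHk] : exists k, (y *m H)%R ord0 k != 0%R.
  apply/existsP; apply: contraR yH_neq0 => /existsPn yH0.
  by apply/eqP; apply/rowP => k; rewrite [RHS]mxE; apply/eqP; exact: negbNE (yH0 k).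
pose yf (t : nat) : R := oapp (y ord0) 0%R (insub t).
have yf_rsum (X : nat -> nat -> R) j :
    rsum m (fun i => yf i * X i j) = (\sum_(i < m) y ord0 i * X i j)%R.
  by rewrite rsum_big; apply: eq_bigr => i _; rewrite /yf valK.
have [_ [js_lt _]] := indep.
exists yf, (List.nth k js 0%N); split; last split.
- by apply: js_lt; apply: nth_In; apply/ltP.
- by move: yHk; rewrite yf_rsum mxE => /eqP; under eq_bigr do rewrite mxE.
- move=> j /ltP lt_jp; rewrite yf_rsum.
  transitivity ((y *m B)%R ord0 (Ordinal lt_jp)); last by rewrite yB0 mxE.
  by rewrite mxE; apply: eq_bigr => i _; rewrite mxE.
Qed.

End ColumnSpace.

Lemma span_orthogonal m p (A : nat -> nat -> R) (y v : nat -> R) :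
  (forall j, (j < p)%nat -> rsum m (fun i => y i * A i j) = 0) ->
  in_col_span m p A v -> rsum m (fun i => y i * v i) = 0.
Proof.
  intros Hy [x Hx].
  rewrite (rsum_ext m _ (fun i => y i * rsum p (fun j => A i j * x j)))
    by (intros i Hi; rewrite Hx; auto).
  rewrite rsum_swap. apply rsum_zero. intros j Hj.
  rewrite (rsum_ext m _ (fun i => x j * (y i * A i j))) by (intros; ring).
  rewrite rsum_scal, Hy by auto. ring.
Qed.

Lemma pairing_transpose m N (y z : nat -> R) (M : nat -> nat -> R) :
  rsum m (fun i => y i * rsum N (fun j => M i j * z j)) =
  rsum N (fun j => rsum m (fun i => y i * M i j) * z j).
Proof.
  rewrite rsum_swap. apply rsum_ext. intros j _.
  rewrite Rmult_comm, <- rsum_scal. apply rsum_ext. intros; ring.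
Qed.

Theorem lemma3p4
  (n : nat) (edges : list (nat * nat)) (c : nat -> R) (Q : list nat)
  (m : nat) (Sn : nat -> nat -> bool) (AG : nat -> nat -> R) (d : R) (r : nat)
  (A : nat -> nat -> R) :
  wf_network n edges c Q ->
  unique_min_cuts n edges c Q ->
  DeltaG n edges c Q d ->
  bipartition_enum Q m Sn ->
  cutset_matrix edges c Q m Sn AG ->
  real_rank m (length edges) AG r ->
  (1 <= r)%nat ->
  (forall i j, (i < m)%nat -> (j < r - 1)%nat -> A i j = 0 \/ A i j = 1) ->
  prob_zero_uniform_box (length edges) (1 / (d * INR (length edges)))
    (fun w => in_col_span m (r - 1) A
       (fun i => rsum (length edges) (fun j => AG i j * (c j + w j)))).
Proof.
  intros _ _ _ _ _ [[js [Hindep Hlen]] _] Hr _.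
  set (N := length edges).
  destruct (ColumnSpace.separating_functional m N (r - 1) AG A js Hindep)
    as [y [j0 [Hj0 [Hu Hy]]]]; [lia|].
  set (u := fun j => rsum m (fun i => y i * AG i j)).
  (* On the event, u . (c + w) = 0: w lies on a hyperplane with u_j0 <> 0. *)
  apply lebesgue_null_mono with
    (fun w => (forall j, (j < N)%nat -> 0 <= w j <= 1 / (d * INR N)) /\
              rsum N (fun j => u j * w j) = - rsum N (fun j => u j * c j)).
  - intros w [Hbox Hspan]. split; auto.
    pose proof (span_orthogonal _ _ _ _ _ Hy Hspan) as Hpair.
    cbv beta in Hpair. rewrite pairing_transpose in Hpair.
    rewrite (rsum_ext N _ (fun j => u j * c j + u j * w j)), rsum_plus in Hpair
      by (intros; unfold u; ring).
    lra.
  - apply (hyperplane_null N _ j0); auto.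
Qed.
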